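(* Each of the exposure metrics $ED$, $ER$, $DTD$, $DTR$, $DID$, $DIR$ satisfies distinguishability of groups: for every population $\mathcal D$ with uniform relevance, $v_{\mathrm{last}}(m,\mathcal D)<v_{\mathrm{opt}}(m)<v_{\mathrm{first}}(m,\mathcal D)$.
   Context: A population is a finite set $\mathcal{D}$ of candidates partitioned into two nonempty groups, a non-protected group $G_0$ and a protected group $G_1$; each candidate $d$ has relevance $y(d)\in\mathbb R$. For a candidate set $D\subseteq\mathcal D$ with $n=|D|$, a ranking is a bijection $r:\{1,\dots,n\}\to D$, $r^{-1}(d)$ denotes the position of $d$. Uniform relevance means $y(d)=1$ for all $d\in\mathcal D$. $\mathcal R_{\mathrm{first}}(D)$ ($\mathcal R_{\mathrm{last}}(D)$) is the set of rankings of $D$ in which every candidate of $G_1\cap D$ is ranked above (below) every candidate of $G_0\cap D$. Under uniform relevance, $v_{\mathrm{first}}(m,D)$ and $v_{\mathrm{last}}(m,D)$ denote the (common) values of $m$ on rankings in $\mathcal R_{\mathrm{first}}(D)$ and $\mathcal R_{\mathrm{last}}(D)$. Position bias $b(k)=1/\log_2(k+1)$. Exposure metrics: for a ranking $r$ of $D$ and $G\in\{G_0,G_1\}$, $\mathrm{Exposure}(G|r)=\frac{1}{|G|}\sum_{d\in G\cap D} b(r^{-1}(d))$, $Y(G)=\frac1{|G|}\sum_{d\in G}y(d)$, $CTR(G|r)=\frac1{|G|}\sum_{d\in G\cap D} b(r^{-1}(d))\,y(d)$ (here $|G|$ is the size of the group in the whole population). Then $ED(r)=\mathrm{Exposure}(G_1|r)-\mathrm{Exposure}(G_0|r)$,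 $ER(r)=\mathrm{Exposure}(G_1|r)/\mathrm{Exposure}(G_0|r)$, $DTD(r)=\frac{\mathrm{Exposure}(G_1|r)}{Y(G_1)}-\frac{\mathrm{Exposure}(G_0|r)}{Y(G_0)}$, $DTR(r)=\frac{\mathrm{Exposure}(G_1|r)}{\mathrm{Exposure}(G_0|r)}\cdot\frac{Y(G_0)}{Y(G_1)}$, $DID(r)=\frac{CTR(G_1|r)}{Y(G_1)}-\frac{CTR(G_0|r)}{Y(G_0)}$, $DIR(r)=\frac{CTR(G_1|r)}{CTR(G_0|r)}\cdot\frac{Y(G_0)}{Y(G_1)}$. Optimal values: $v_{\mathrm{opt}}=0$ for $ED,DTD,DID$ and $v_{\mathrm{opt}}=1$ for $ER,DTR,DIR$. *)

From HB Require Import structures.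
From mathcomp Require Import all_boot all_order all_algebra.
From mathcomp Require Import all_classical all_reals all_analysis.
Set Implicit Arguments. Unset Strict Implicit. Unset Printing Implicit Defensive.
Import Order.TTheory GRing.Theory Num.Theory.
Local Open Scope ring_scope.

(* Population: a finite type T; [g d = true] iff d is in the protected
   group G1, [g d = false] iff d is in the non-protected group G0.  The candidate set is the whole population.
   A ranking of T is encoded by its inverse: an injective (hence bijective)
   map [pos : T -> 'I_#|T|]; the (1-based) position r^{-1}(d) is [pos d + 1]. *)

Section Fairness.
Variables (R : realType) (T : finType).

Definition log2 (x : R) : R := ln x / ln 2.

Definition bias (k : nat) : R := 1 / log2 (k%:R + 1).

Definition is_ranking (pos : T -> 'I_#|T|) : Prop := injective pos.

Definition position (pos : T -> 'I_#|T|) (d : T) : nat := (nat_of_ord (pos d)).+1.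

Definition group_size (g : T -> bool) (i : bool) : R :=
  (#|[pred d | g d == i]|)%:R.

Definition Exposure (g : T -> bool) (i : bool) (pos : T -> 'I_#|T|) : R :=
  (group_size g i)^-1 * \sum_(d | g d == i) bias (position pos d).

Definition Yavg (g : T -> bool) (y : T -> R) (i : bool) : R :=
  (group_size g i)^-1 * \sum_(d | g d == i) y d.

Definition CTR (g : T -> bool) (y : T -> R) (i : bool) (pos : T -> 'I_#|T|) : R :=
  (group_size g i)^-1 * \sum_(d | g d == i) bias (position pos d) * y d.

Definition ED g (y : T -> R) pos := Exposure g true pos - Exposure g false pos.
Definition ER g (y : T -> R) pos := Exposure g true pos / Exposure g false pos.
Definition DTD g y pos :=
  Exposure g true pos / Yavg g y true - Exposure g false pos / Yavg g y false.
Definition DTR g y pos :=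
  (Exposure g true pos / Exposure g false pos) * (Yavg g y false / Yavg g y true).
Definition DID g y pos :=
  CTR g y true pos / Yavg g y true - CTR g y false pos / Yavg g y false.
Definition DIR g y pos :=
  (CTR g y true pos / CTR g y false pos) * (Yavg g y false / Yavg g y true).

Definition ranked_first (g : T -> bool) (pos : T -> 'I_#|T|) : Prop :=
  forall d1 d0, g d1 = true -> g d0 = false -> (position pos d1 < position pos d0)%N.
Definition ranked_last (g : T -> bool) (pos : T -> 'I_#|T|) : Prop :=
  forall d1 d0, g d1 = true -> g d0 = false -> (position pos d0 < position pos d1)%N.

End Fairness.

Inductive metric := mED | mER | mDTD | mDTR | mDID | mDIR.

Definition eval_metric (R : realType) (T : finType) (m : metric) :
  (T -> bool) -> (T -> R) -> (T -> 'I_#|T|) -> R :=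
  match m with
  | mED => @ED R T | mER => @ER R T | mDTD => @DTD R T
  | mDTR => @DTR R T | mDID => @DID R T | mDIR => @DIR R T
  end.

Definition v_opt (R : realType) (m : metric) : R :=
  match m with mED | mDTD | mDID => 0 | mER | mDTR | mDIR => 1 end.

From mathcomp Require Import all_boot all_order all_algebra.
From mathcomp Require Import all_classical all_reals all_analysis.
Import Order.TTheory GRing.Theory Num.Theory.
Set Implicit Arguments. Unset Strict Implicit. Unset Printing Implicit Defensive.
Local Open Scope ring_scope.

(* The position bias is positive and strictly decreasing, so the exposure of a
   group (the mean bias over its members) is squeezed between the biases of its
   best and worst positions.  If every protected candidate is ranked above every
   non-protected one, the protected mean exceeds the bias of the best
   non-protected position, which bounds the non-protected mean; hence
   Exposure(G1) > Exposure(G0) > 0, and symmetrically for R_last.  Under uniform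
   relevance Y = 1 and CTR = Exposure, so each metric is Exposure(G1) -
   Exposure(G0) or Exposure(G1) / Exposure(G0), and the claim follows. *)

Section Mean.
Variables (R : numFieldType) (T : finType).

Lemma lt_mean (P : pred T) (f : T -> R) (c : R) :
  (exists d, P d) -> (forall d, P d -> c < f d) ->
  c < #|P|%:R^-1 * \sum_(d | P d) f d.
Proof.
move=> [d0 Pd0] lt_cf.
have card_gt0 : (0 < #|P|)%N by apply/card_gt0P; exists d0.
rewrite ltr_pdivlMl ?ltr0n // mulr_natl -sumr_const.
by apply: ltr_sum => //; apply/hasP; exists d0; rewrite ?mem_index_enum.
Qed.

Lemma mean_le (P : pred T) (f : T -> R) (c : R) :
  (exists d, P d) -> (forall d, P d -> f d <= c) ->
  #|P|%:R^-1 * \sum_(d | P d) f d <= c.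
Proof.
move=> [d0 Pd0] le_fc.
have card_gt0 : (0 < #|P|)%N by apply/card_gt0P; exists d0.
by rewrite ler_pdivrMl ?ltr0n // mulr_natl -sumr_const; apply: ler_sum.
Qed.

End Mean.

Section Exposure.
Variables (R : realType) (T : finType).

Lemma ln_natS_gt0 (k : nat) : (0 < k)%N -> 0 < ln (k%:R + 1 : R).
Proof. by move=> k_gt0; apply: ln_gt0; rewrite ltrDr ltr0n. Qed.

Lemma biasE (k : nat) : bias R k = ln 2 / ln (k%:R + 1).
Proof. by rewrite /bias /log2 mul1r invf_div. Qed.

Lemma bias_gt0 (k : nat) : (0 < k)%N -> 0 < bias R k.
Proof. by move=> k_gt0; rewrite biasE divr_gt0 ?ln_natS_gt0 ?ln_gt0 ?ltr1n. Qed.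

Lemma bias_lt (k k' : nat) : (0 < k)%N -> (k < k')%N -> bias R k' < bias R k.
Proof.
move=> k_gt0 lt_kk'; have k'_gt0 := ltn_trans k_gt0 lt_kk'.
rewrite !biasE ltr_pM2l ?ln_gt0 ?ltr1n // ltf_pV2 ?posrE ?ln_natS_gt0 //.
by rewrite ltr_ln ?posrE ?ltrD2r ?ltr_nat // addr_gt0 ?ltr0n.
Qed.

Lemma bias_le (k k' : nat) : (0 < k)%N -> (k <= k')%N -> bias R k' <= bias R k.
Proof.
move=> k_gt0; rewrite leq_eqVlt => /predU1P[-> // | lt_kk'].
exact/ltW/bias_lt.
Qed.

Variables (g : T -> bool) (pos : T -> 'I_#|T|).

Lemma Exposure_gt0 (i : bool) : (exists d, g d = i) -> 0 < Exposure R g i pos.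
Proof.
move=> [d gd]; apply: lt_mean => [|e _]; first by exists d; rewrite /= gd.
exact: bias_gt0.
Qed.

Lemma Exposure_lt_ranked_above (i : bool) :
  (exists d, g d = i) -> (exists d, g d = ~~ i) ->
  (forall a b, g a = i -> g b = ~~ i -> (position pos a < position pos b)%N) ->
  Exposure R g (~~ i) pos < Exposure R g i pos.
Proof.
move=> [a ga] [b gb] above.
have Pb : g b == ~~ i by rewrite gb.
case: (@arg_minnP T b (fun d => g d == ~~ i) (position pos) Pb).
move=> best /eqP g_best best_min.
apply: (@le_lt_trans _ _ (bias R (position pos best))).
  by apply: mean_le => [|e /best_min]; [exists b | exact: bias_le].
apply: lt_mean => [|e /eqP ge]; first by exists a; rewrite /= ga.
exact: bias_lt (above _ _ ge g_best).
Qed.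

Variable y : T -> R.
Hypothesis y1 : forall d, y d = 1.

Lemma Yavg_uniform (i : bool) : (exists d, g d = i) -> Yavg g y i = 1.
Proof.
move=> [d gd]; rewrite /Yavg; under eq_bigr do rewrite y1.
rewrite sumr_const mulVf // pnatr_eq0 -lt0n.
by apply/card_gt0P; exists d; rewrite inE /= gd.
Qed.

Lemma CTR_uniform (i : bool) : CTR g y i pos = Exposure R g i pos.
Proof. by rewrite /CTR /Exposure; under eq_bigr do rewrite y1 mulr1. Qed.

End Exposure.

Definition metric_of_exposures (R : fieldType) (m : metric) (e1 e0 : R) : R :=
  match m with mED | mDTD | mDID => e1 - e0 | mER | mDTR | mDIR => e1 / e0 end.

Lemma eval_metric_uniform (R : realType) (T : finType) (g : T -> bool)
    (y : T -> R) (m : metric) (pos : T -> 'I_#|T|) :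
  (exists d, g d = false) -> (exists d, g d = true) -> (forall d, y d = 1) ->
  eval_metric m g y pos =
    metric_of_exposures m (Exposure R g true pos) (Exposure R g false pos).
Proof.
move=> G0 G1 y1; rewrite /metric_of_exposures.
by case: m; rewrite /= /DTD /DTR /DID /DIR ?Yavg_uniform ?CTR_uniform ?divr1 ?mulr1.
Qed.

Lemma metric_of_exposures_lt_opt (R : realType) (m : metric) (e1 e0 : R) :
  0 < e0 -> e1 < e0 -> metric_of_exposures m e1 e0 < v_opt R m.
Proof.
by move=> e0_gt0 lt_e10; case: m; rewrite /= ?subr_lt0 ?ltr_pdivrMr ?mul1r.
Qed.

Lemma metric_of_exposures_gt_opt (R : realType) (m : metric) (e1 e0 : R) :
  0 < e0 -> e0 < e1 -> v_opt R m < metric_of_exposures m e1 e0.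
Proof.
by move=> e0_gt0 lt_e01; case: m; rewrite /= ?subr_gt0 ?ltr_pdivlMr ?mul1r.
Qed.

Theorem theorem2 (R : realType) (T : finType) (g : T -> bool) (y : T -> R)
  (m : metric) :
  (exists d, g d = false) -> (exists d, g d = true) ->
  (forall d, y d = 1) ->
  (forall pos : T -> 'I_#|T|, is_ranking pos -> ranked_last g pos ->
     eval_metric m g y pos < v_opt R m) /\
  (forall pos : T -> 'I_#|T|, is_ranking pos -> ranked_first g pos ->
     v_opt R m < eval_metric m g y pos).
Proof.
move=> G0 G1 y1; split=> pos _ ranked; rewrite eval_metric_uniform //.
- apply: metric_of_exposures_lt_opt; first exact: Exposure_gt0.
  apply: (Exposure_lt_ranked_above _ G0 G1) => a b ga gb.
  exact: ranked b a gb ga.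
- apply: metric_of_exposures_gt_opt; first exact: Exposure_gt0.
  apply: (Exposure_lt_ranked_above _ G1 G0) => a b ga gb.
  exact: ranked a b ga gb.
Qed.
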